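(* Let $\lambda>0$. Then $\lim_{c_0\to\infty}M_2(\lambda,c_0)=\sqrt{2}$.
   Context: For $A\in\mathbb{R}^{3\times3}$ let $\lambda_1(A),\lambda_2(A),\lambda_3(A)$ be its singular values, $P(A)=\sum_{1\le i<j\le3}\lambda_i(A)\lambda_j(A)-\lambda\sum_i\lambda_i(A)$, $N(A)=\operatorname{tr}\operatorname{cof}A-\lambda\operatorname{tr}A$ (cof the cofactor matrix), and $G(A)=P(A)-N(A)$. $|\cdot|$ is the Frobenius norm and $\mathbf{1}$ the identity. For $c_0>0$, $M_2(\lambda,c_0)=\sup\{|G(A)|/|A-\lambda\mathbf{1}|^2:\ |A-\lambda\mathbf{1}|\ge c_0\}$. *)

From HB Require Import structures.
From mathcomp Require Import all_boot all_order all_algebra.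
From mathcomp Require Import all_classical all_reals all_analysis.
Set Implicit Arguments. Unset Strict Implicit. Unset Printing Implicit Defensive.
Import Order.TTheory GRing.Theory Num.Theory.
Local Open Scope ring_scope.
Local Open Scope classical_set_scope.

Section Defs.
Variable R : realType.

Definition frob (A : 'M[R]_3) : R := Num.sqrt (\sum_(i < 3) \sum_(j < 3) A i j ^+ 2).

Definition cof (A : 'M[R]_3) : 'M[R]_3 := \matrix_(i, j) cofactor A i j.

Definition singvals (A : 'M[R]_3) (l : 'I_3 -> R) : Prop :=
  (forall i, 0 <= l i) /\
  char_poly (A^T *m A) = \prod_(i < 3) ('X - (l i ^+ 2)%:P).

(* P(A) expressed through the singular values l *)
Definition Pfun (lam : R) (l : 'I_3 -> R) : R :=
  \sum_(i < 3) \sum_(j < 3 | (i < j)%N) l i * l j - lam * \sum_(i < 3) l i.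

Definition Nfun (lam : R) (A : 'M[R]_3) : R := \tr (cof A) - lam * \tr A.

Definition M2 (lam c0 : R) : \bar R :=
  ereal_sup [set x : \bar R | exists (A : 'M[R]_3) (l : 'I_3 -> R),
     [/\ c0 <= frob (A - lam%:M), singvals A l &
          x = (`|Pfun lam l - Nfun lam A| / frob (A - lam%:M) ^+ 2)%:E]].
End Defs.

From Pilot Require Import Defs.
From HB Require Import structures.
From mathcomp Require Import all_boot all_order all_algebra.
From mathcomp Require Import all_classical all_reals all_analysis.
From mathcomp Require Import perm ring lra.
Import Order.TTheory GRing.Theory Num.Theory.
Local Open Scope ring_scope.
Local Open Scope classical_set_scope.
Set Implicit Arguments. Unset Strict Implicit. Unset Printing Implicit Defensive.

(* Write S = A^T A = sum_i l_i^2 E_i with rank-one orthogonal projectors E_i, where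
   the l_i are the singular values of A.  When A is invertible, W = K^-1 adj A with
   K = sum_i (prod_(j != i) l_j) E_i is a rotation, so that
   tr (adj A) = sum_i (prod_(j != i) l_j) z_i with z_i = tr (W E_i).  Since
   tr R >= -1 for every rotation R, applying this to the rotations W (sum_i s_i E_i)
   with signs s_i of product 1 puts z in the tetrahedron spanned by (1,1,1),
   (1,-1,-1), (-1,1,-1), (-1,-1,1).  Minimising the linear form over it gives
   e2(l) - tr (cof A) <= 2 l_max (sum of the two other l_i) <= sqrt 2 |A|^2;
   singular A and the lower bound follow from (tr (cof A))^2 <= 3 e2(l^2).  The terms
   carrying lam are O(lam |A - lam 1|), hence M2 <= sqrt 2 + O(1/c0).  Conversely
   A = diag(lam - u, lam - u, lam + sqrt 2 u) has |A - lam 1| = 2u and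
   |G(A)| = 4 sqrt 2 u (u - lam), so M2 >= sqrt 2 (1 - 2 lam / c0). *)

Lemma sum3 (V : nmodType) (f : 'I_3 -> V) :
  \sum_(k < 3) f k = f (inord 0) + f (inord 1) + f (inord 2).
Proof.
rewrite !big_ord_recr big_ord0 /= add0r.
by congr (f _ + f _ + f _); apply/val_inj; rewrite /= inordK.
Qed.

Lemma prod3 (R : pzSemiRingType) (f : 'I_3 -> R) :
  \prod_(k < 3) f k = f (inord 0) * f (inord 1) * f (inord 2).
Proof.
rewrite !big_ord_recr big_ord0 /= mul1r.
by congr (f _ * f _ * f _); apply/val_inj; rewrite /= inordK.
Qed.

Lemma mulmx_scalar_sub (R : comRingType) n (S : 'M[R]_n) a b :
  (S - a%:M) *m (S - b%:M) = S *m S - (a + b) *: S + (a * b)%:M.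
Proof.
rewrite mulmxBl !mulmxBr !mul_mx_scalar !mul_scalar_mx scale_scalar_mx scalerDl.
by rewrite opprB opprD !addrA mulrC addrAC (addrAC (S *m S) (- (b *: S))).
Qed.

Lemma scalar_sub_mxC (R : comRingType) n (S : 'M[R]_n) a b :
  (S - a%:M) *m (S - b%:M) = (S - b%:M) *m (S - a%:M).
Proof. by rewrite !mulmx_scalar_sub (addrC a) (mulrC a). Qed.

Lemma horner_char_poly (R : comRingType) n (A : 'M[R]_n) x :
  (char_poly A).[x] = \det (x%:M - A).
Proof.
rewrite /char_poly -[_.[x]]/(horner_eval x _) -det_map_mx; congr (\det _).
by apply/matrixP => i j; rewrite !mxE rmorphB rmorphMn /= !horner_evalE hornerX hornerC.
Qed.

Section Coordinates3.
Variable R : comRingType.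
Implicit Types A B : 'M[R]_3.

(* Entries addressed by [nat] indices through [inord], so that rewriting can expand
   identities between 3x3 matrices into their nine coordinates. *)
Definition ent A (i j : nat) := A (inord i) (inord j).

Lemma entE A (i j : 'I_3) : A i j = ent A i j.
Proof. by rewrite /ent !inord_val. Qed.

Lemma ent0 i j : ent (0 : 'M[R]_3) i j = 0.
Proof. by rewrite /ent mxE. Qed.
Lemma entD A B i j : ent (A + B) i j = ent A i j + ent B i j.
Proof. by rewrite /ent mxE. Qed.
Lemma entN A i j : ent (- A) i j = - ent A i j.
Proof. by rewrite /ent mxE. Qed.
Lemma entB A B i j : ent (A - B) i j = ent A i j - ent B i j.
Proof. by rewrite /ent !mxE. Qed.
Lemma entZ a A i j : ent (a *: A) i j = a * ent A i j.
Proof. by rewrite /ent mxE. Qed.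
Lemma ent_tr A i j : ent A^T i j = ent A j i.
Proof. by rewrite /ent mxE. Qed.
Lemma ent_scalar a (i j : nat) : (i < 3)%N -> (j < 3)%N -> ent a%:M i j = a *+ (i == j).
Proof. by move=> hi hj; rewrite /ent mxE -val_eqE /= !inordK. Qed.
Lemma ent_mul A B i j :
  ent (A *m B) i j = ent A i 0 * ent B 0 j + ent A i 1 * ent B 1 j + ent A i 2 * ent B 2 j.
Proof. by rewrite /ent mxE sum3. Qed.

Lemma mxtrace3 A : \tr A = ent A 0 0 + ent A 1 1 + ent A 2 2.
Proof. by rewrite /mxtrace sum3. Qed.

Lemma mx3P A B :
  ent A 0 0 = ent B 0 0 -> ent A 0 1 = ent B 0 1 -> ent A 0 2 = ent B 0 2 ->
  ent A 1 0 = ent B 1 0 -> ent A 1 1 = ent B 1 1 -> ent A 1 2 = ent B 1 2 ->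
  ent A 2 0 = ent B 2 0 -> ent A 2 1 = ent B 2 1 -> ent A 2 2 = ent B 2 2 ->
  A = B.
Proof.
move=> *; apply/matrixP => i j; rewrite !entE.
by case: i => [[|[|[|i]]] hi] //; case: j => [[|[|[|j]]] hj].
Qed.

Lemma det3 A : \det A =
  ent A 0 0 * ent A 1 1 * ent A 2 2 + ent A 0 1 * ent A 1 2 * ent A 2 0
  + ent A 0 2 * ent A 1 0 * ent A 2 1 - ent A 0 0 * ent A 1 2 * ent A 2 1
  - ent A 0 1 * ent A 1 0 * ent A 2 2 - ent A 0 2 * ent A 1 1 * ent A 2 0.
Proof.
rewrite (expand_det_row _ ord0) !big_ord_recr big_ord0 /= /cofactor.
rewrite !(expand_det_row _ ord0) !big_ord_recr big_ord0 /= /cofactor.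
by rewrite !det_mx11 !mxE /= !entE /= !big_ord0; ring.
Qed.

Definition next3 (i : nat) := nth 0%N [:: 1; 2; 0]%N i.
Definition prev3 (i : nat) := nth 0%N [:: 2; 0; 1]%N i.

Definition minor3 A (i j : nat) :=
  ent A (next3 i) (next3 j) * ent A (prev3 i) (prev3 j)
  - ent A (next3 i) (prev3 j) * ent A (prev3 i) (next3 j).

Lemma ent_adj A (i j : nat) : (i < 3)%N -> (j < 3)%N -> ent (\adj A) i j = minor3 A j i.
Proof.
rewrite /ent mxE /cofactor /minor3.
case: i => [|[|[|i]]] // _; case: j => [|[|[|j]]] // _ /=.
all: rewrite (expand_det_row _ ord0) !big_ord_recr big_ord0 /= /cofactor.
all: by rewrite !det_mx11 !mxE /= !entE /= !inordK //= /bump /=; ring.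
Qed.

End Coordinates3.

Ltac mx3_simpl :=
  rewrite ?(ent0, entD, entN, entB, entZ, ent_tr, ent_mul) ?ent_scalar //=.

Section Identities3.
Variable R : comRingType.
Implicit Types A X : 'M[R]_3.

Lemma mxtrace_adj3 X : 2 * \tr (\adj X) = \tr X ^+ 2 - \tr (X *m X).
Proof. by rewrite !mxtrace3 !ent_adj // /minor3 /=; mx3_simpl; ring. Qed.

Lemma det_newton3 X :
  6 * \det X = \tr X ^+ 3 - 3 * \tr X * \tr (X *m X) + 2 * \tr (X *m X *m X).
Proof. by rewrite det3 !mxtrace3; mx3_simpl; ring. Qed.

Lemma det_scalar_sub3 x X :
  \det (x%:M - X) = x ^+ 3 - \tr X * x ^+ 2 + \tr (\adj X) * x - \det X.
Proof. by rewrite !det3 !mxtrace3 !ent_adj // /minor3 /=; mx3_simpl; ring. Qed.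

Lemma mxtrace_adj_mulTmx3 A : \tr (\adj (A^T *m A)) = \tr ((\adj A)^T *m \adj A).
Proof. by rewrite !mxtrace3; mx3_simpl; rewrite !ent_adj // /minor3 /=; mx3_simpl; ring. Qed.


End Identities3.

Section OrthoFrame.
Variables (R : comRingType) (n : nat).
Implicit Types (E : 'I_n -> 'M[R]_n) (a b : 'I_n -> R).

(* The projectors E i = e_i e_i^T of an orthonormal basis (e_i); working with them
   instead of the vectors e_i avoids square roots. *)
Definition orthoframe E :=
  [/\ forall i, (E i)^T = E i,
      forall i j, E i *m E j = (i == j)%:R *: E i,
      \sum_i E i = 1%:M &
      forall i, \tr (E i) = 1].

Definition frame_mx E a := \sum_i a i *: E i.

Lemma mxtrace_delta (i : 'I_n) : \tr (delta_mx i i : 'M[R]_n) = 1.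
Proof.
rewrite /mxtrace (bigD1 i) //= big1 => [|j /negbTE nji]; last by rewrite mxE nji.
by rewrite mxE eqxx addr0.
Qed.

Lemma orthoframe_delta : orthoframe (fun i => delta_mx i i).
Proof.
split=> [i|i j||i]; [exact: trmx_delta | | by rewrite mx1_sum_delta | exact: mxtrace_delta].
by rewrite mul_delta_mx_cond; case: eqP => [->|_]; rewrite ?scale1r ?scale0r.
Qed.

Variable E : 'I_n -> 'M[R]_n.
Hypothesis frameE : orthoframe E.

Lemma eq_frame_mx a b : a =1 b -> frame_mx E a = frame_mx E b.
Proof. by move=> ab; apply: eq_bigr => i _; rewrite ab. Qed.

Lemma frame_mxM a b : frame_mx E a *m frame_mx E b = frame_mx E (fun i => a i * b i).
Proof.
case: frameE => _ EM _ _; rewrite /frame_mx mulmx_suml; apply: eq_bigr => i _.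
rewrite mulmx_sumr (bigD1 i) //= big1 => [|j /negbTE nij]; last first.
  by rewrite -scalemxAl -scalemxAr EM eq_sym nij scale0r !scaler0.
by rewrite -scalemxAl -scalemxAr EM eqxx scale1r scalerA addr0.
Qed.

Lemma trmx_frame_mx a : (frame_mx E a)^T = frame_mx E a.
Proof.
case: frameE => ET _ _ _; rewrite /frame_mx raddf_sum; apply: eq_bigr => i _.
by rewrite /= linearZ /= ET.
Qed.

Lemma frame_mx_cst k : frame_mx E (fun=> k) = k%:M.
Proof. by case: frameE => _ _ E1 _; rewrite /frame_mx -scaler_sumr E1 scalemx1. Qed.

Lemma mxtrace_mulmx_frame_mx W a :
  \tr (W *m frame_mx E a) = \sum_i a i * \tr (W *m E i).
Proof.
rewrite /frame_mx mulmx_sumr raddf_sum; apply: eq_bigr => i _.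
by rewrite /= -scalemxAr mxtraceZ.
Qed.

Lemma mxtrace_frame_mx a : \tr (frame_mx E a) = \sum_i a i.
Proof.
case: frameE => _ _ _ Etr; rewrite -[frame_mx E a]mul1mx mxtrace_mulmx_frame_mx.
by apply: eq_bigr => i _; rewrite mul1mx Etr mulr1.
Qed.

Variables (s : 'I_n -> 'I_n) (s_inj : injective s).

Lemma orthoframe_comp : orthoframe (E \o s).
Proof.
case: frameE => ET EM E1 Etr; split=> [i|i j||i] /=.
- exact: ET.
- by rewrite EM (inj_eq s_inj).
- by rewrite -E1 [RHS](reindex_inj s_inj).
- exact: Etr.
Qed.

Lemma frame_mx_comp a : frame_mx (E \o s) (a \o s) = frame_mx E a.
Proof. by rewrite /frame_mx [RHS](reindex_inj s_inj). Qed.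

End OrthoFrame.

Lemma det_frame_mx3 (R : realFieldType) (E : 'I_3 -> 'M[R]_3) a :
  orthoframe E -> \det (frame_mx E a) = \prod_i a i.
Proof.
move=> frameE; apply: (@mulfI _ 6); first by rewrite pnatr_eq0.
rewrite det_newton3 !frame_mxM // !mxtrace_frame_mx // !sum3 prod3; ring.
Qed.

Section CharPoly3.
Variable R : realFieldType.
Implicit Types S : 'M[R]_3.

Lemma char_poly3_roots S m0 m1 m2 :
  char_poly S = ('X - m0%:P) * ('X - m1%:P) * ('X - m2%:P) ->
  [/\ \tr S = m0 + m1 + m2, \tr (\adj S) = m0 * m1 + m0 * m2 + m1 * m2 &
      (S - m0%:M) *m (S - m1%:M) *m (S - m2%:M) = 0].
Proof.
move=> chS.
have ev x : \det (x%:M - S) = (x - m0) * (x - m1) * (x - m2).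
  by rewrite -horner_char_poly chS !hornerE.
have := ev 0; have := ev 1; have := ev (-1); rewrite !det_scalar_sub3 => e1 e2 e3.
have trS : \tr S = m0 + m1 + m2 by lra.
split=> //; first lra.
have := Cayley_Hamilton S; rewrite chS !rmorphM /= !rmorphB /= !horner_mx_X !horner_mx_C.
by rewrite -!mulmxE.
Qed.

End CharPoly3.

Lemma delta_mul_delta (R : comRingType) n (A : 'M[R]_n) (i j k l : 'I_n) :
  delta_mx i j *m A *m delta_mx k l = A j k *: delta_mx i l.
Proof.
apply/matrixP => p q; rewrite !mxE (bigD1 k) //= big1 => [|b /negbTE nbk]; last first.
  by rewrite !mxE nbk mulr0.
rewrite !mxE eqxx addr0 (bigD1 j) //= big1 => [|a /negbTE naj]; last first.
  by rewrite !mxE naj andbF mul0r.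
rewrite !mxE !eqxx andbT addr0.
by case: (p == i); case: (q == l); rewrite /= ?mulr1 ?mul1r ?mulr0 ?mul0r.
Qed.

Lemma sym_idem_split (R : fieldType) n (L : 'M[R]_n) k :
  L^T = L -> L *m L = L -> L k k != 0 ->
  exists2 P : 'M[R]_n, [/\ P^T = P, P *m P = P & \tr P = 1] & L *m P = P /\ P *m L = P.
Proof.
move=> LT LL Lkk; set d : 'M[R]_n := delta_mx k k.
exists ((L k k)^-1 *: (L *m d *m L)); last first.
  by rewrite -scalemxAl -scalemxAr !mulmxA LL -(mulmxA (L *m d)) LL.
split.
- by rewrite linearZ /= !trmx_mul trmx_delta LT mulmxA.
- have LdLdL : L *m d *m L *m (L *m d *m L) = L *m (d *m L *m d) *m L.
    by rewrite !mulmxA -(mulmxA (L *m d) L L) LL.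
  rewrite -scalemxAl -scalemxAr scalerA LdLdL delta_mul_delta -scalemxAr -scalemxAl.
  by rewrite scalerA mulrAC mulVf // mul1r.
- rewrite mxtraceZ mxtrace_mulC mulmxA LL -[d in L *m d](mul_delta_mx k k k) mulmxA.
  by rewrite mxtrace_mulC mulmxA delta_mul_delta mxtraceZ mxtrace_delta mulr1 mulVf.
Qed.

Definition vec3 T (x y z : T) (i : 'I_3) : T := nth x [:: x; y; z] i.

Lemma vec3_inord T (f : 'I_3 -> T) i : vec3 (f (inord 0)) (f (inord 1)) (f (inord 2)) i = f i.
Proof. by case: i => [[|[|[|i]]] hi] //=; congr f; apply: val_inj; rewrite /= inordK. Qed.

Lemma trmx_sub_scalar (R : comRingType) n (S : 'M[R]_n) a : S^T = S -> (S - a%:M)^T = S - a%:M.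
Proof. by move=> ST; rewrite linearB /= ST tr_scalar_mx. Qed.

Lemma sum_vec3 (V : nmodType) (x y z : V) : \sum_i vec3 x y z i = x + y + z.
Proof. by rewrite sum3 /vec3 !inordK. Qed.

Section Spectral3.
Variable R : realFieldType.
Implicit Types S Y : 'M[R]_3.

Lemma orthoframe3 (E0 E1 E2 : 'M[R]_3) :
  [/\ E0^T = E0, E1^T = E1 & E2^T = E2] ->
  [/\ E0 *m E0 = E0, E1 *m E1 = E1 & E2 *m E2 = E2] ->
  [/\ E0 *m E1 = 0, E0 *m E2 = 0 & E1 *m E2 = 0] ->
  E0 + E1 + E2 = 1%:M -> [/\ \tr E0 = 1, \tr E1 = 1 & \tr E2 = 1] ->
  orthoframe (vec3 E0 E1 E2).
Proof.
move=> [T0 T1 T2] [I0 I1 I2] [P01 P02 P12] sum1 [t0 t1 t2].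
have Prev (A B : 'M[R]_3) : A^T = A -> B^T = B -> A *m B = 0 -> B *m A = 0.
  by move=> AT BT AB; rewrite -[B *m A]trmxK trmx_mul AT BT AB trmx0.
split=> [[[|[|[|i]]] hi] | [[|[|[|i]]] hi] [[|[|[|j]]] hj] | | [[|[|[|i]]] hi]] //=.
all: rewrite /vec3 /= ?scale1r ?scale0r //.
all: try by apply: Prev.
by rewrite sum_vec3.
Qed.

Lemma frame_mx_vec3 (E0 E1 E2 : 'M[R]_3) a b c :
  frame_mx (vec3 E0 E1 E2) (vec3 a b c) = a *: E0 + b *: E1 + c *: E2.
Proof. by rewrite /frame_mx sum3 /vec3 !inordK. Qed.

Lemma sym_mx3_sqr_eq0 Y : Y^T = Y -> Y *m Y = 0 -> Y = 0.
Proof.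
move=> YT YY; have : \tr (Y^T *m Y) = 0 by rewrite YT YY mxtrace0.
by rewrite mxtrace3; mx3_simpl => ht; apply: mx3P; rewrite ent0; nra.
Qed.

Lemma sym_mx3_scalar S m : S^T = S ->
  (S - m%:M) *m (S - m%:M) *m (S - m%:M) = 0 -> S = m%:M.
Proof.
move=> ST CH; set G := S - m%:M.
have GT : G^T = G by exact: trmx_sub_scalar.
have GG : G *m G = 0.
  by apply: sym_mx3_sqr_eq0; rewrite ?trmx_mul ?GT // mulmxA CH mul0mx.
by apply/eqP; rewrite -subr_eq0; apply/eqP; apply: sym_mx3_sqr_eq0.
Qed.

Lemma sym_mx3_spectral_simple S m0 m1 m2 : S^T = S ->
  m0 != m1 -> m0 != m2 -> m1 != m2 ->
  (S - m0%:M) *m (S - m1%:M) *m (S - m2%:M) = 0 ->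
  \tr S = m0 + m1 + m2 -> \tr (S *m S) = m0 ^+ 2 + m1 ^+ 2 + m2 ^+ 2 ->
  exists2 E, orthoframe E & S = frame_mx E (vec3 m0 m1 m2).
Proof.
move=> ST n01 n02 n12 CH trS trS2.
have [n10 n20 n21] : [/\ m1 != m0, m2 != m0 & m2 != m1].
  by rewrite eq_sym n01 eq_sym n02 eq_sym n12.
pose F a b := (S - a%:M) *m (S - b%:M).
have FT a b : (F a b)^T = F a b by rewrite trmx_mul !trmx_sub_scalar // scalar_sub_mxC.
have FS a b c : F a b *m (S - c%:M) = 0 -> F a b *m S = c *: F a b.
  by move=> h; apply/eqP; rewrite -subr_eq0 -mul_mx_scalar -mulmxBr h.
have FF a b c d e : F a b *m S = c *: F a b ->
    F a b *m F d e = ((c - d) * (c - e)) *: F a b.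
  move=> h; have Fsub x : F a b *m (S - x%:M) = (c - x) *: F a b.
    by rewrite mulmxBr h mul_mx_scalar scalerBl.
  by rewrite mulmxA Fsub -scalemxAl Fsub scalerA.
have F0S : F m1 m2 *m S = m0 *: F m1 m2.
  apply: FS; rewrite /F -mulmxA (scalar_sub_mxC S m2 m0) mulmxA.
  by rewrite (scalar_sub_mxC S m1 m0).
have F1S : F m0 m2 *m S = m1 *: F m0 m2.
  by apply: FS; rewrite /F -mulmxA (scalar_sub_mxC S m2 m1) mulmxA.
have F2S : F m0 m1 *m S = m2 *: F m0 m1 by exact: FS.
have trF a b : \tr (F a b) = \tr (S *m S) - (a + b) * \tr S + 3 * (a * b).
  by rewrite /F mulmx_scalar_sub !raddfD raddfN /= mxtraceZ mxtrace_scalar mulr_natl.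
pose E0 := ((m0 - m1) * (m0 - m2))^-1 *: F m1 m2.
pose E1 := ((m1 - m0) * (m1 - m2))^-1 *: F m0 m2.
pose E2 := ((m2 - m0) * (m2 - m1))^-1 *: F m0 m1.
have scaleM (x y : R) (X Y : 'M[R]_3) : (x *: X) *m (y *: Y) = (x * y) *: (X *m Y).
  by rewrite -scalemxAl -scalemxAr scalerA.
exists (vec3 E0 E1 E2).
  apply: orthoframe3.
  - by split; rewrite linearZ /= FT.
  - split; rewrite /E0 /E1 /E2 scaleM ?(FF _ _ _ _ _ F0S) ?(FF _ _ _ _ _ F1S);
    by rewrite ?(FF _ _ _ _ _ F2S) scalerA divfK // mulf_neq0 // subr_eq0.
  - split; rewrite /E0 /E1 /E2 scaleM ?(FF _ _ _ _ _ F0S) ?(FF _ _ _ _ _ F1S);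
    by rewrite subrr ?mul0r ?mulr0 scale0r scaler0.
  - apply: mx3P; rewrite /E0 /E1 /E2 /F; mx3_simpl; field;
    by rewrite !subr_eq0 ?n01 ?n02 ?n12 ?n10 ?n20 ?n21.
  - split; rewrite mxtraceZ trF trS trS2; field;
    by rewrite !subr_eq0 ?n01 ?n02 ?n12 ?n10 ?n20 ?n21.
rewrite frame_mx_vec3; apply: mx3P; rewrite /E0 /E1 /E2 /F; mx3_simpl; field;
by rewrite !subr_eq0 ?n01 ?n02 ?n12 ?n10 ?n20 ?n21.
Qed.

Lemma sym_mx3_spectral_double S m m2 : S^T = S -> m != m2 ->
  (S - m%:M) *m (S - m%:M) *m (S - m2%:M) = 0 -> \tr S = m + m + m2 ->
  exists2 E, orthoframe E & S = frame_mx E (vec3 m m m2).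
Proof.
move=> ST nm CH trS.
have dm : m2 - m != 0 by rewrite subr_eq0 eq_sym.
set G := S - m%:M.
have GT : G^T = G by exact: trmx_sub_scalar.
have GS : G *m S = m2 *: G.
  suff G0 : G *m (S - m2%:M) = 0.
    by apply/eqP; rewrite -subr_eq0 -mul_mx_scalar -mulmxBr G0.
  apply: sym_mx3_sqr_eq0; first by rewrite trmx_mul !trmx_sub_scalar // scalar_sub_mxC.
  rewrite -!mulmxA (mulmxA (S - m2%:M)) (scalar_sub_mxC S m2 m) !mulmxA.
  by rewrite -/G CH mul0mx.
set L2 := (m2 - m)^-1 *: G; set L := 1%:M - L2.
have L2L2 : L2 *m L2 = L2.
  rewrite -scalemxAl -scalemxAr {2}/G mulmxBr GS mul_mx_scalar -scalerBl !scalerA.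
  by rewrite mulrAC mulVf // mul1r.
have L2T : L2^T = L2 by rewrite linearZ /= GT.
have LT : L^T = L by rewrite linearB /= trmx1 L2T.
have LL2 : L *m L2 = 0 by rewrite mulmxBl mul1mx L2L2 subrr.
have L2L : L2 *m L = 0 by rewrite mulmxBr mulmx1 L2L2 subrr.
have LL : L *m L = L by rewrite {1}/L mulmxBl mul1mx L2L subr0.
have trL2 : \tr L2 = 1.
  by rewrite mxtraceZ raddfB /= mxtrace_scalar trS; field.
have trL : \tr L = 2 by rewrite raddfB /= mxtrace_scalar trL2; ring.
have [k Lkk] : exists k, L k k != 0.
  case/boolP: [exists k, L k k != 0] => [/existsP // | /existsPn L0].
  move: trL; rewrite /mxtrace big1 => [/eqP|k _]; first by rewrite eq_sym pnatr_eq0.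
  by apply/eqP/negPn/L0.
have [P [PT PP trP] [LP PL]] := sym_idem_split LT LL Lkk.
exists (vec3 P (L - P) L2); last first.
  rewrite frame_mx_vec3 -scalerDr (addrC P) subrK /L scalerBr addrAC -addrA -scalerBl.
  by rewrite /L2 scalerA mulfV // scale1r scalemx1 /G addrC subrK.
have L_L2 : L + L2 = 1%:M by rewrite subrK.
clearbody L; apply: orthoframe3.
- by split; rewrite // linearB /= LT PT.
- by split=> //; rewrite mulmxBl !mulmxBr LL LP PL PP subrr subr0.
- split; first by rewrite mulmxBr PL PP subrr.
    by rewrite -PL -mulmxA LL2 mulmx0.
  by rewrite mulmxBl LL2 -PL -mulmxA LL2 mulmx0 subrr.
- by rewrite (addrC P) subrK.
- by split; rewrite // raddfB /= trL trP; ring.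
Qed.

Lemma sym_mx3_spectral S (m : 'I_3 -> R) : S^T = S ->
  char_poly S = \prod_i ('X - (m i)%:P) -> exists2 E, orthoframe E & S = frame_mx E m.
Proof.
move=> ST.
have canon (m' : 'I_3 -> R) : char_poly S = \prod_i ('X - (m' i)%:P) ->
    m' (inord 0) = m' (inord 1) \/
    [/\ m' (inord 0) != m' (inord 1), m' (inord 0) != m' (inord 2)
       & m' (inord 1) != m' (inord 2)] ->
    exists2 E, orthoframe E & S = frame_mx E m'.
  rewrite prod3 => chS hm.
  set m0 := m' (inord 0) in chS hm *; set m1 := m' (inord 1) in chS hm *.
  set m2 := m' (inord 2) in chS hm *.
  have [trS trA CH] := char_poly3_roots chS.
  suff [E frameE SE] : exists2 E, orthoframe E & S = frame_mx E (vec3 m0 m1 m2).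
    by exists E => //; rewrite SE; apply: eq_bigr => i _; rewrite vec3_inord.
  case: hm => [m01 | [n01 n02 n12]]; last first.
    apply: sym_mx3_spectral_simple => //.
    by have := mxtrace_adj3 S; rewrite trS trA; lra.
  rewrite -m01 in CH trS *; case: (eqVneq m0 m2) => [m02 | n02].
    rewrite -m02 in CH *; exists (fun i => delta_mx i i); first exact: orthoframe_delta.
    rewrite (sym_mx3_scalar ST CH) -(frame_mx_cst (orthoframe_delta _ _)).
    by apply: eq_bigr => -[[|[|[|i]]] hi].
  exact: sym_mx3_spectral_double.
(* Otherwise a transposition brings the repeated root to the first two places. *)
move=> chS; have by_perm (s : 'S_3) : m (s (inord 0)) = m (s (inord 1)) ->
    exists2 E, orthoframe E & S = frame_mx E m.
  move=> ms; have [|E frameE SE] := canon (m \o s) _ (or_introl ms).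
    by rewrite chS [LHS](reindex_inj (@perm_inj _ s)).
  exists (E \o (s^-1)%g); first exact: orthoframe_comp perm_inj.
  rewrite SE -(frame_mx_comp E (@perm_inj _ (s^-1)%g)).
  by apply: eq_bigr => i _ /=; rewrite permKV.
have [i01 i02 i12] : [/\ inord 0 != inord 1 :> 'I_3, inord 0 != inord 2 :> 'I_3
    & inord 1 != inord 2 :> 'I_3] by rewrite -!val_eqE /= !inordK.
case: (eqVneq (m (inord 0)) (m (inord 1))) => [m01|n01].
  by apply: canon => //; left.
case: (eqVneq (m (inord 1)) (m (inord 2))) => [m12|n12].
  by apply: (by_perm (tperm (inord 0) (inord 2))); rewrite tpermL tpermD // eq_sym.
case: (eqVneq (m (inord 0)) (m (inord 2))) => [m02|n02].
  by apply: (by_perm (tperm (inord 1) (inord 2))); rewrite tpermL tpermD // eq_sym.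
by apply: canon => //; right.
Qed.

End Spectral3.

Section Rotation3.
Variable R : realFieldType.

Lemma mxtrace3_sqr_le (M : 'M[R]_3) : \tr M ^+ 2 <= 3 * \tr (M^T *m M).
Proof.
rewrite !mxtrace3; mx3_simpl.
move: (ent M 0 0) (ent M 0 1) (ent M 0 2) (ent M 1 0) (ent M 1 1) (ent M 1 2)
  (ent M 2 0) (ent M 2 1) (ent M 2 2) => x y z u v w p q t.
have := sqr_ge0 (x - v); have := sqr_ge0 (v - t); have := sqr_ge0 (x - t).
have := sqr_ge0 y; have := sqr_ge0 z; have := sqr_ge0 u; have := sqr_ge0 w.
have := sqr_ge0 p; have := sqr_ge0 q; nra.
Qed.

Lemma rotation3_mxtrace_ge (W : 'M[R]_3) : W^T *m W = 1%:M -> \det W = 1 -> -1 <= \tr W.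
Proof.
move=> WTW detW.
have adjW : \adj W = W^T.
  by rewrite -[\adj W]mulmx1 -(mulmx1C WTW) mulmxA mul_adj_mx detW mul1mx.
have trWW : \tr (W *m W) <= 3.
  have := mxtrace3_sqr_le (W *m W).
  rewrite trmx_mul -mulmxA (mulmxA W^T W) WTW mul1mx WTW mxtrace1; nra.
have := mxtrace_adj3 W; rewrite adjW mxtrace_tr; nra.
Qed.

End Rotation3.

Section Polar3.
Variable R : realFieldType.
Variables (A : 'M[R]_3) (E : 'I_3 -> 'M[R]_3) (l : 'I_3 -> R).
Hypotheses (frameE : orthoframe E) (l_neq0 : forall i, l i != 0).
Hypothesis AtA : A^T *m A = frame_mx E (fun i => l i ^+ 2).

Lemma adj_polar3 : exists2 W : 'M[R]_3, W^T *m W = 1%:M /\ \det W = 1 &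
  \adj A = frame_mx E (fun i => (\prod_j l j) / l i) *m W.
Proof.
set p := \prod_j l j; set K := frame_mx E _.
have p_neq0 : p != 0 by rewrite prodf_seq_neq0; apply/allP => i _; apply: l_neq0.
set Ki := frame_mx E (fun i => l i / p).
have frame1 a : (forall i, a i = 1) -> frame_mx E a = 1%:M.
  by move=> a1; rewrite (eq_frame_mx _ a1) frame_mx_cst.
have KKi : K *m Ki = 1%:M.
  by rewrite frame_mxM // frame1 // => i; field; rewrite p_neq0 l_neq0.
have KiK : Ki *m K = 1%:M.
  by rewrite frame_mxM // frame1 // => i; field; rewrite p_neq0 l_neq0.
have detA2 : \det A ^+ 2 = p ^+ 2.
  by rewrite expr2 -{1}det_tr -det_mulmx AtA det_frame_mx3 // prodrXl.
set D := \adj A.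
have DDt : D *m D^T = K *m K.
  set Si := frame_mx E (fun i => (l i ^+ 2)^-1).
  have SiS : Si *m (A^T *m A) = 1%:M.
    by rewrite AtA frame_mxM // frame1 // => i; field; rewrite l_neq0.
  have SDD : A^T *m A *m (D *m D^T) = (\det A ^+ 2)%:M.
    rewrite /D trmx_adj -!mulmxA (mulmxA A) mul_mx_adj mul_scalar_mx -scalemxAr.
    by rewrite mul_mx_adj det_tr scale_scalar_mx expr2.
  have SKK : A^T *m A *m (K *m K) = (p ^+ 2)%:M.
    rewrite AtA !frame_mxM // -(frame_mx_cst frameE); apply: eq_frame_mx => i; field.
    by rewrite l_neq0.
  by rewrite -[D *m _]mul1mx -SiS -mulmxA SDD detA2 -SKK mulmxA SiS mul1mx.
have detD : \det D = p ^+ 2.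
  have detA_neq0 : \det A != 0 by rewrite -sqrf_eq0 detA2 sqrf_eq0.
  apply: (mulfI detA_neq0); rewrite -det_mulmx mul_mx_adj det_scalar.
  by rewrite -detA2 exprS.
exists (Ki *m D); last by rewrite mulmxA KKi mul1mx.
split.
  apply: mulmx1C; rewrite trmx_mul trmx_frame_mx // -mulmxA (mulmxA D) DDt.
  by rewrite !mulmxA KiK mul1mx KKi.
rewrite det_mulmx detD det_frame_mx3 // /p !prod3; field.
by rewrite !l_neq0.
Qed.

End Polar3.

Definition esym2 (R : ringType) n (x : 'I_n -> R) :=
  \sum_(i < n) \sum_(j < n | (i < j)%N) x i * x j.

Lemma esym2_3 (R : ringType) (x : 'I_3 -> R) :
  esym2 x = x (inord 0) * x (inord 1) + x (inord 0) * x (inord 2) + x (inord 1) * x (inord 2).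
Proof.
rewrite /esym2 sum3; do 3 rewrite big_mkcond sum3 /= ?inordK //=.
by rewrite !add0r !addr0.
Qed.

Section CofactorBound.
Variable R : rcfType.
Implicit Types a b c x y z T : R.

Lemma sqr_sqrt2 : Num.sqrt 2 ^+ 2 = 2 :> R.
Proof. by rewrite sqr_sqrtr // ler0n. Qed.

Lemma sqrt2_bounds : 1 <= (Num.sqrt 2 : R) <= 3 / 2.
Proof.
by have := sqr_sqrt2; have := sqrtr_ge0 (2 : R); move=> r0 r2; apply/andP; split; nra.
Qed.

Lemma mul_add_le_sqrt2 x y z : 0 <= x -> 0 <= y -> 0 <= z ->
  2 * z * (x + y) <= Num.sqrt 2 * (x ^+ 2 + y ^+ 2 + z ^+ 2).
Proof.
move=> x0 y0 z0; set r := Num.sqrt 2.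
have sos : r * (x ^+ 2 + y ^+ 2 + z ^+ 2) - 2 * z * (x + y) =
    r / 2 * (x - y) ^+ 2 + r / 2 * (x + y - r * z) ^+ 2.
  apply/eqP; rewrite -subr_eq0; apply/eqP.
  transitivity ((r ^+ 2 - 2) * (z * (x + y) - r / 2 * z ^+ 2)); first by field.
  by rewrite sqr_sqrt2 subrr mul0r.
have : 0 <= r / 2 * (x - y) ^+ 2 + r / 2 * (x + y - r * z) ^+ 2.
  by apply: addr_ge0; apply: mulr_ge0; rewrite ?sqr_ge0 ?divr_ge0 ?sqrtr_ge0.
lra.
Qed.

Lemma tetrahedron_bound a b c (z0 z1 z2 : R) : 0 <= a -> 0 <= b -> 0 <= c ->
  -1 <= z0 + z1 + z2 -> -1 <= z0 - z1 - z2 -> -1 <= - z0 + z1 - z2 -> -1 <= - z0 - z1 + z2 ->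
  a * b + a * c + b * c - (b * c * z0 + a * c * z1 + a * b * z2)
    <= Num.sqrt 2 * (a ^+ 2 + b ^+ 2 + c ^+ 2).
Proof.
suff max_last a' b' c' (w0 w1 w2 : R) : 0 <= a' -> 0 <= b' -> a' <= c' -> b' <= c' ->
    -1 <= w0 + w1 + w2 -> -1 <= w0 - w1 - w2 -> -1 <= - w0 + w1 - w2 ->
    a' * b' + a' * c' + b' * c' - (b' * c' * w0 + a' * c' * w1 + a' * b' * w2)
      <= Num.sqrt 2 * (a' ^+ 2 + b' ^+ 2 + c' ^+ 2).
  move=> a0 b0 c0 h1 h2 h3 h4.
  case: (lerP a c) => ac; case: (lerP b c) => bc; last case: (lerP a b) => ab.
  - exact: max_last.
  - by have := max_last c a b z2 z0 z1; lra.
  - by have := max_last b c a z1 z2 z0; lra.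
  - by have := max_last c a b z2 z0 z1; lra.
  - by have := max_last b c a z1 z2 z0; lra.
move=> a0 b0 ac bc h1 h2 h3.
(* The linear form in [w] is a nonnegative combination of the three constraints. *)
have t1 : 0 <= (b' * c' + a' * c') / 2 * (1 + (w0 + w1 + w2)).
  by apply: mulr_ge0; [apply: divr_ge0; nra | lra].
have t2 : 0 <= (b' * c' - a' * b') / 2 * (1 + (w0 - w1 - w2)).
  by apply: mulr_ge0; [apply: divr_ge0; nra | lra].
have t3 : 0 <= (a' * c' - a' * b') / 2 * (1 + (- w0 + w1 - w2)).
  by apply: mulr_ge0; [apply: divr_ge0; nra | lra].
have := mul_add_le_sqrt2 a0 b0 (le_trans a0 ac); lra.
Qed.

Lemma esym2_sub_ge a b c T : 0 <= a -> 0 <= b -> 0 <= c ->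
  T ^+ 2 <= 3 * (a ^+ 2 * b ^+ 2 + a ^+ 2 * c ^+ 2 + b ^+ 2 * c ^+ 2) ->
  - (Num.sqrt 2 * (a ^+ 2 + b ^+ 2 + c ^+ 2)) <= a * b + a * c + b * c - T.
Proof.
move=> a0 b0 c0 T2.
have /andP[sqrt2_ge1 _] := sqrt2_bounds.
have q_le : 3 * (a ^+ 2 * b ^+ 2 + a ^+ 2 * c ^+ 2 + b ^+ 2 * c ^+ 2)
    <= (a ^+ 2 + b ^+ 2 + c ^+ 2) ^+ 2.
  have := sqr_ge0 (a ^+ 2 - b ^+ 2); have := sqr_ge0 (a ^+ 2 - c ^+ 2).
  have := sqr_ge0 (b ^+ 2 - c ^+ 2); nra.
have T_le : T <= a ^+ 2 + b ^+ 2 + c ^+ 2 by nra.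
nra.
Qed.

Lemma esym2_sub_le_singular a b c T : 0 <= a -> 0 <= b -> 0 <= c -> a * b * c = 0 ->
  T ^+ 2 <= 3 * (a ^+ 2 * b ^+ 2 + a ^+ 2 * c ^+ 2 + b ^+ 2 * c ^+ 2) ->
  a * b + a * c + b * c - T <= Num.sqrt 2 * (a ^+ 2 + b ^+ 2 + c ^+ 2).
Proof.
suff two x y : 0 <= x -> 0 <= y -> T ^+ 2 <= 3 * (x ^+ 2 * y ^+ 2) ->
    x * y - T <= Num.sqrt 2 * (x ^+ 2 + y ^+ 2).
  move=> a0 b0 c0 /eqP; rewrite !mulf_eq0 -orbA => /or3P[] /eqP-> T2.
  - by have := two b c b0 c0; nra.
  - by have := two a c a0 c0; nra.
  - by have := two a b a0 b0; nra.
move=> x0 y0 T2; have := sqr_sqrt2; have := sqrt2_bounds.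
set r := Num.sqrt 2 => /andP[r_ge r_le] r2.
have xy0 : 0 <= x * y by exact: mulr_ge0.
have xy_le : 2 * (x * y) <= x ^+ 2 + y ^+ 2 by have := sqr_ge0 (x - y); nra.
set d := r * (x ^+ 2 + y ^+ 2) - x * y.
have d_ge : (2 * r - 1) * (x * y) <= d by rewrite /d; nra.
have d0 : 0 <= d by nra.
have d2 : 3 * (x ^+ 2 * y ^+ 2) <= d ^+ 2.
  have : (2 * r - 1) ^+ 2 * (x * y) ^+ 2 <= d ^+ 2.
    have : 0 <= (2 * r - 1) * (x * y) by apply: mulr_ge0 => //; lra.
    rewrite -exprMn; nra.
  have : 3 <= (2 * r - 1) ^+ 2 by nra.
  nra.
have : - d <= T by nra.
rewrite /d; lra.
Qed.

Lemma esym2_sub_mxtrace_adj_le (A : 'M[R]_3) E (l : 'I_3 -> R) :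
  orthoframe E -> (forall i, 0 < l i) -> A^T *m A = frame_mx E (fun i => l i ^+ 2) ->
  esym2 l - \tr (\adj A) <= Num.sqrt 2 * \sum_i l i ^+ 2.
Proof.
move=> frameE l_gt0 AtA.
have l_neq0 i : l i != 0 by rewrite gt_eqF.
have [W [WtW detW] adjA] := adj_polar3 frameE l_neq0 AtA.
set z := fun i => \tr (W *m E i).
have rotation_ge x y w : x ^+ 2 = 1 -> y ^+ 2 = 1 -> w ^+ 2 = 1 -> x * y * w = 1 ->
    -1 <= x * z (inord 0) + y * z (inord 1) + w * z (inord 2).
  move=> x2 y2 w2 xyw; set X := frame_mx E (vec3 x y w).
  have XtX : X^T *m X = 1%:M.
    rewrite trmx_frame_mx // frame_mxM // -(frame_mx_cst frameE 1); apply: eq_frame_mx.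
    by case=> [[|[|[|i]]] hi] //=; rewrite /vec3 /= -expr2.
  have := @rotation3_mxtrace_ge _ (W *m X).
  rewrite mxtrace_mulmx_frame_mx // sum3 /vec3 !inordK //=; apply.
    by rewrite trmx_mul -mulmxA (mulmxA W^T) WtW mul1mx.
  by rewrite det_mulmx detW det_frame_mx3 // prod3 /vec3 !inordK //= mul1r.
have sq1 : (1 : R) ^+ 2 = 1 by rewrite expr1n.
have sqN1 : (-1 : R) ^+ 2 = 1 by rewrite sqrrN expr1n.
have := rotation_ge 1 1 1 sq1 sq1 sq1 ltac:(ring).
have := rotation_ge 1 (-1) (-1) sq1 sqN1 sqN1 ltac:(ring).
have := rotation_ge (-1) 1 (-1) sqN1 sq1 sqN1 ltac:(ring).
have := rotation_ge (-1) (-1) 1 sqN1 sqN1 sq1 ltac:(ring).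
have trD : \tr (\adj A) = l (inord 1) * l (inord 2) * z (inord 0)
    + l (inord 0) * l (inord 2) * z (inord 1) + l (inord 0) * l (inord 1) * z (inord 2).
  by rewrite adjA mxtrace_mulC mxtrace_mulmx_frame_mx // sum3 prod3; field; rewrite !l_neq0.
rewrite trD esym2_3 sum3 !mulN1r !mul1r => h4 h3 h2 h1.
by apply: tetrahedron_bound; try exact: ltW; lra.
Qed.

End CofactorBound.

Section SingularValues.
Variable R : realType.
Implicit Types (A : 'M[R]_3) (l : 'I_3 -> R).

Lemma mxtrace_cof A : \tr (cof A) = \tr (\adj A).
Proof. by apply: eq_bigr => i _; rewrite !mxE. Qed.

Lemma frob_sqr A : frob A ^+ 2 = \tr (A^T *m A).
Proof.
rewrite /frob sqr_sqrtr; last by do 2![apply: sumr_ge0 => ? _]; exact: sqr_ge0.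
rewrite /mxtrace exchange_big; apply: eq_bigr => j _; rewrite mxE.
by apply: eq_bigr => i _; rewrite mxE expr2.
Qed.

Lemma singvals_char_poly A l : singvals A l ->
  [/\ forall i, 0 <= l i, frob A ^+ 2 = \sum_i l i ^+ 2 &
      \tr (\adj (A^T *m A)) = esym2 (fun i => l i ^+ 2)].
Proof.
case=> l_ge0 chS; have [trS trAS _] := char_poly3_roots (etrans chS (prod3 _)).
by split=> //; rewrite ?frob_sqr ?trS ?trAS ?sum3 ?esym2_3.
Qed.

Lemma singvals_esym2_sub_cof A l : singvals A l ->
  `|esym2 l - \tr (cof A)| <= Num.sqrt 2 * frob A ^+ 2.
Proof.
move=> svA; have [l_ge0 frobA trAS] := singvals_char_poly svA.
have T2 : \tr (\adj A) ^+ 2 <= 3 * esym2 (fun i => l i ^+ 2).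
  by rewrite -trAS mxtrace_adj_mulTmx3 mxtrace3_sqr_le.
rewrite mxtrace_cof frobA ler_norml; apply/andP; split.
  by rewrite esym2_3 in T2; rewrite esym2_3 sum3; apply: esym2_sub_ge.
have [l_gt0 | /forallPn[i]] := boolP [forall i, 0 < l i].
  have AtAT : (A^T *m A)^T = A^T *m A by rewrite trmx_mul trmxK.
  case: svA => _ chS; have [E frameE AtA] := sym_mx3_spectral AtAT chS.
  by apply: (esym2_sub_mxtrace_adj_le frameE _ AtA) => i; exact: (forallP l_gt0 i).
rewrite -leNgt => li_le0; have li0 : l i = 0 by apply/le_anti; rewrite li_le0 l_ge0.
have prod0 : \prod_j l j = 0 by rewrite (bigD1 i) //= li0 mul0r.
rewrite esym2_3 in T2; rewrite esym2_3 sum3; apply: esym2_sub_le_singular => //.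
by rewrite -prod3.
Qed.

Lemma lambda_terms_le (lam f t s D : R) : 0 < lam -> lam <= f -> t ^+ 2 <= 3 * f ^+ 2 ->
  0 <= s -> s ^+ 2 <= 3 * (f ^+ 2 + 2 * lam * t + 3 * lam ^+ 2) ->
  `|D| <= Num.sqrt 2 * (f ^+ 2 + 2 * lam * t + 3 * lam ^+ 2) ->
  `|D - lam * (s - (t + 3 * lam))| <= Num.sqrt 2 * f ^+ 2 + 24 * lam * f.
Proof.
move=> lam0 lam_f t2 s0 s2 D_le.
have := sqrtr_ge0 (2 : R); have := sqrt2_bounds R.
set r := Num.sqrt 2 => /andP[_ r_le] r0.
have f0 : 0 < f by lra.
have [t_le t_ge] : t <= 2 * f /\ - (2 * f) <= t by clear -t2 f0; split; nra.
have q_le : f ^+ 2 + 2 * lam * t + 3 * lam ^+ 2 <= (f + 2 * lam) ^+ 2 by nra.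
have s_le : s <= 2 * (f + 2 * lam) by nra.
have D_le' : `|D| <= r * f ^+ 2 + 12 * lam * f.
  apply: (le_trans D_le); apply: (le_trans (ler_wpM2l r0 q_le)).
  have : 0 <= r * lam * (f - lam) by apply: mulr_ge0; [apply: mulr_ge0 |]; lra.
  have : 0 <= lam * f * (3 / 2 - r) by apply: mulr_ge0; [apply: mulr_ge0 |]; lra.
  nra.
have lin_le : `|lam * (s - (t + 3 * lam))| <= 11 * lam * f.
  by rewrite ler_norml; apply/andP; split; nra.
have lamf0 := mulr_ge0 (ltW lam0) (ltW f0).
by apply: (le_trans (ler_normB _ _)); lra.
Qed.

Lemma frob_sub_scalar_sqr A (lam : R) : frob A ^+ 2 =
  frob (A - lam%:M) ^+ 2 + 2 * lam * \tr (A - lam%:M) + 3 * lam ^+ 2.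
Proof. by rewrite !frob_sqr !mxtrace3; mx3_simpl; ring. Qed.

Lemma normG_le (lam : R) A l : 0 < lam -> singvals A l -> lam <= frob (A - lam%:M) ->
  `|Defs.Pfun lam l - Defs.Nfun lam A| <=
    Num.sqrt 2 * frob (A - lam%:M) ^+ 2 + 24 * lam * frob (A - lam%:M).
Proof.
move=> lam0 svA lam_f; have [l_ge0 frobA _] := singvals_char_poly svA.
have -> : Defs.Pfun lam l - Defs.Nfun lam A =
    esym2 l - \tr (cof A) - lam * (\sum_i l i - (\tr (A - lam%:M) + 3 * lam)).
  by rewrite /Defs.Pfun /Defs.Nfun /esym2 (raddfB (@mxtrace R 3)) /= mxtrace_scalar; ring.
apply: lambda_terms_le; rewrite -?frob_sub_scalar_sqr //.
- by rewrite frob_sqr mxtrace3_sqr_le.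
- by apply: sumr_ge0.
- rewrite frobA !sum3; have := sqr_ge0 (l (inord 0) - l (inord 1)).
  have := sqr_ge0 (l (inord 0) - l (inord 2)); have := sqr_ge0 (l (inord 1) - l (inord 2)).
  nra.
- exact: singvals_esym2_sub_cof.
Qed.

End SingularValues.

Lemma ent_diag (R : comRingType) (d : 'rV[R]_3) (i j : nat) : (i < 3)%N -> (j < 3)%N ->
  ent (diag_mx d) i j = d 0 (inord i) *+ (i == j).
Proof. by move=> hi hj; rewrite /ent !mxE -val_eqE /= !inordK. Qed.

Section Extremal.
Variables (R : realType) (lam u : R).
Hypotheses (lam_gt0 : 0 < lam) (lam_le_u : lam <= u).

Definition extremal_mx : 'M[R]_3 :=
  diag_mx (\row_i vec3 (lam - u) (lam - u) (lam + Num.sqrt 2 * u) i).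
Definition extremal_singvals := vec3 (u - lam) (u - lam) (lam + Num.sqrt 2 * u).

Let u_gt0 : 0 < u. Proof. exact: lt_le_trans lam_le_u. Qed.

Ltac diag_simpl := rewrite /extremal_mx /extremal_singvals; mx3_simpl;
  rewrite ?ent_diag // !mxE /vec3 !inordK //=.

Lemma extremal_singvalsP : singvals extremal_mx extremal_singvals.
Proof.
split=> [[[|[|[|i]]] hi] //|]; rewrite /extremal_singvals /vec3 /= ?subr_ge0 //.
  by apply: addr_ge0; [exact: ltW | apply: mulr_ge0; rewrite ?sqrtr_ge0 ?ltW].
have -> : extremal_mx^T *m extremal_mx = diag_mx (\row_i extremal_singvals i ^+ 2).
  by apply: mx3P; diag_simpl; ring.
rewrite char_poly_trig ?diag_mx_is_trig //; apply: eq_bigr => i _.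
by rewrite !mxE eqxx mulr1n.
Qed.

Lemma frob_extremal : frob (extremal_mx - lam%:M) = 2 * u.
Proof.
apply/eqP; rewrite -(@eqrXn2 _ 2) ?sqrtr_ge0 ?mulr_ge0 ?ltW //.
rewrite frob_sqr mxtrace3; diag_simpl; rewrite -subr_eq0; apply/eqP.
by transitivity ((Num.sqrt 2 ^+ 2 - 2) * u ^+ 2); [ring | rewrite sqr_sqrt2 subrr mul0r].
Qed.

Lemma normG_extremal :
  `|Defs.Pfun lam extremal_singvals - Defs.Nfun lam extremal_mx| =
    4 * Num.sqrt 2 * u * (u - lam).
Proof.
rewrite /Defs.Nfun mxtrace_cof !mxtrace3 !ent_adj // /minor3 /=.
rewrite -[Defs.Pfun _ _]/(esym2 _ - lam * _) esym2_3 sum3.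
diag_simpl; transitivity `|4 * Num.sqrt 2 * u * (u - lam)|; first by congr `|_|; ring.
by rewrite ger0_norm // !mulr_ge0 ?sqrtr_ge0 ?subr_ge0 // ltW.
Qed.

End Extremal.

Section M2Bounds.
Variables (R : realType) (lam : R).
Hypothesis lam_gt0 : 0 < lam.

Lemma M2_le c0 : lam <= c0 -> (M2 lam c0 <= (Num.sqrt 2 + 24 * (lam / c0))%:E)%E.
Proof.
move=> lam_c0; apply: ge_ereal_sup => _ [A [l [c0_f svA ->]]]; rewrite lee_fin.
have normG := normG_le lam_gt0 svA (le_trans lam_c0 c0_f).
set f := frob (A - lam%:M) in c0_f normG *.
have c0_gt0 : 0 < c0 by apply: lt_le_trans lam_c0.
have f_gt0 : 0 < f by apply: lt_le_trans c0_f.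
have k_c0 : 24 * (lam / c0) * c0 = 24 * lam by rewrite -mulrA divfK ?gt_eqF.
have k_ge0 : 0 <= 24 * (lam / c0) by rewrite mulr_ge0 ?divr_ge0 ?ler0n ?ltW.
have f_c0 : 0 <= f * (f - c0) by apply: mulr_ge0; lra.
have := mulr_ge0 k_ge0 f_c0.
rewrite ler_pdivrMr ?exprn_gt0 //; nra.
Qed.

(* [extremal_mx] is asymptotically the equality case of [tetrahedron_bound]:
   a = b, c ~ sqrt 2 a and z = (-1, -1, 1). *)
Lemma M2_ge c0 : 2 * lam <= c0 ->
  ((Num.sqrt 2 - 2 * Num.sqrt 2 * (lam / c0))%:E <= M2 lam c0)%E.
Proof.
move=> lam_c0; have c0_gt0 : 0 < c0 by apply: lt_le_trans lam_c0; rewrite mulr_gt0.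
have lam_u : lam <= c0 / 2 by lra.
apply: ereal_sup_ubound; exists (extremal_mx lam (c0 / 2)), (extremal_singvals lam (c0 / 2)).
rewrite frob_extremal // normG_extremal //; split=> //; first lra.
  exact: extremal_singvalsP.
by congr (_%:E); field; rewrite gt_eqF.
Qed.

Lemma M2_near_sqrt2 c0 : 2 * lam <= c0 ->
  ((Num.sqrt 2 - 24 * (lam / c0))%:E <= M2 lam c0 <= (Num.sqrt 2 + 24 * (lam / c0))%:E)%E.
Proof.
move=> lam_c0; have c0_gt0 : 0 < c0 by apply: lt_le_trans lam_c0; rewrite mulr_gt0.
have k_ge0 : 0 <= lam / c0 by rewrite divr_ge0 ?ltW.
have /andP[_ sqrt2_le] := sqrt2_bounds R.
rewrite M2_le ?andbT; last by apply: le_trans lam_c0; rewrite ler_pMl // ler1n.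
by apply: le_trans (M2_ge lam_c0); rewrite lee_fin; nra.
Qed.

End M2Bounds.

Theorem proposition3p6 (R : realType) (lam : R) (hlam : 0 < lam) :
  M2 lam c0 @[c0 --> +oo] --> (Num.sqrt 2 : R)%:E.
Proof.
apply/fine_cvgP; split.
  exists (2 * lam); split=> [|c0 /ltW/(M2_near_sqrt2 hlam)]; first by rewrite num_real.
  by case: (M2 lam c0) => [x| |] // /andP[].
apply/cvgrPdist_le => e e_gt0; exists (Num.max (2 * lam) (24 * lam / e)).
split=> [|c0]; first by rewrite num_real.
rewrite gt_max => /andP[/ltW/(M2_near_sqrt2 hlam)/andP[lo up] c0_e].
have c0_gt0 : 0 < c0 by apply: le_lt_trans c0_e; rewrite divr_ge0 ?mulr_ge0 ?ltW.
have : 24 * (lam / c0) <= e.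
  by rewrite mulrA ler_pdivrMr // -ler_pdivrMl // mulrC ltW.
rewrite /=; move: lo up; case: (M2 lam c0) => [x| |] //= lo up k_e.
by rewrite !lee_fin in lo up; rewrite ler_norml; apply/andP; split; lra.
Qed.
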